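(* Assume (A1), (A2), (A4), (A5), (A6) and (A7) of the context. Then for $1\le k,\ell\le d$, $$\frac1{\sqrt n}\sum_{i=1}^n\Big\{R_{b_n,k}(Y_i)R_{b_n,\ell}(Y_i)\frac{f(Y_i)}{f_{b_n}(Y_i)}-\mathbb{E}\Big[R_{b_n,k}(Y)R_{b_n,\ell}(Y)\frac{f(Y)}{f_{b_n}(Y)}\Big]\Big\}$$ $$=\frac1{\sqrt n}\sum_{i=1}^n\Big\{R_k(Y_i)R_\ell(Y_i)-\mathbb{E}\big[R_k(Y)R_\ell(Y)\big]\Big\}+o_p(1).$$
   Context: Setting. $X=(X_1,\dots,X_d)^T$ is an $\mathbb{R}^d$-valued random vector and $Y$ a real random variable with density $f>0$ on $\mathbb{R}$; each $(X_j,Y)$ has joint density $f_{(X_j,Y)}$; $g_j(y)=\int xf_{(X_j,Y)}(x,y)dx$, $R_j=g_j/f$; $f,g_j\in L^2(\mathbb{R})$. $\{(X^{(i)},Y_i)\}_{i=1}^n$ i.i.d. sample of $(X,Y)$. $\varphi$ father wavelet, $\psi$ associated mother wavelet forming (via $\varphi(\cdot-k)$, $2^{\ell/2}\psi(2^\ell\cdot-k)$) an orthonormal basis of $L^2(\mathbb{R})$; $K(x,y)=\sum_k\varphi(x-k)\varphi(y-k)$. $(j_n)$ increasing integers tending to $\infty$. $(b_n)$ positive, $b_n\to0$; $f_{b_n}=\max(f,b_n)$, $R_{b_n,j}=g_j/f_{b_n}$. $u_n\sim v_n$ means $u_n/v_n$ bounded away from $0$ and $\infty$ for large $n$. Assumptions.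 (A1) $\|X\|\le G$ for some $G>0$. (A2) $f,g_j$ three times differentiable; there exist a neighborhood $U$ of $0$ and $c>0$ with $|f^{(3)}(y+u)-f^{(3)}(y)|\le c|u|$, $|g_j^{(3)}(y+u)-g_j^{(3)}(y)|\le c|u|$ for all $y$, $u\in U$, $j$. (A4) $\varphi,\psi$ bounded, compactly supported. (A5) $|K(x,y)|\le\Phi(x-y)$, $\Phi\ge0$ bounded, compactly supported, symmetric, $\int u^2\Phi^2<\infty$, $\int|u|^k\Phi<\infty$ for $k\in\{0,1,4\}$; $\int K(x,y)(y-x)^kdy=0$ for all $x$, $k\in\{1,2,3\}$. (A6) $2^{-j_n}\sim n^{-c_1}$, $b_n\sim n^{-c_2}$, $0<c_2<1/10$, $1/8+c_2/4<c_1<1/4-c_2$. (A7) $\mathbb{E}[R_j^2(Y)]<\infty$ for all $j$, and $\sqrt n\,\mathbb{E}[|R_k(Y)R_\ell(Y)|\mathbf 1_{\{f(Y)\le a_n\}}]\to0$ for all $k,\ell$ and every positive $(a_n)$ with $a_n\sim b_n$. *)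

From HB Require Import structures.
From mathcomp Require Import all_boot all_order all_algebra.
From mathcomp Require Import all_classical all_reals all_analysis.
Set Implicit Arguments. Unset Strict Implicit. Unset Printing Implicit Defensive.
Import Order.TTheory GRing.Theory Num.Theory numFieldNormedType.Exports.
Local Open Scope classical_set_scope.
Local Open Scope ring_scope.

Section Defs.
Context {R : realType}.
Notation mu := (@lebesgue_measure R).

Definition asym_equiv (u v : nat -> R) : Prop :=
  exists m M : R, 0 < m /\ 0 < M /\ \forall n \near \oo, m <= u n / v n <= M.

Definition L2fun (h : R -> R) : Prop :=
  measurable_fun setT h /\ (\int[mu]_x ((h x) ^+ 2)%:E < +oo)%E.

Definition L2inner (h1 h2 : R -> R) : \bar R := \int[mu]_x (h1 x * h2 x)%:E.

Definition bdd_fun (h : R -> R) : Prop := exists M : R, forall x, `|h x| <= M.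
Definition compact_supp (h : R -> R) : Prop :=
  exists A : R, forall x, A < `|x| -> h x = 0.

Definition wavelet_system (phi psi : R -> R) (a : int + (nat * int)) : R -> R :=
  match a with
  | inl k => fun x => phi (x - k%:~R)
  | inr (l, k) => fun x => Num.sqrt (2 ^+ l) * psi (2 ^+ l * x - k%:~R)
  end.

Definition is_ONB_L2 (e : int + (nat * int) -> R -> R) : Prop :=
  (forall a, L2fun (e a)) /\
  (forall a b, L2inner (e a) (e b) = (if a == b then 1 else 0)%:E) /\
  (forall h, L2fun h -> (forall a, L2inner h (e a) = 0%E) ->
     {ae mu, forall x, h x = 0}).

(* K(x,y) = sum_{k in Z} phi(x-k) phi(y-k), as limit of symmetric partial sums *)
Definition wkernel (phi : R -> R) (x y : R) : R :=
  lim ((fun N : nat => \sum_(i < (2 * N).+1)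
          phi (x - (i%:Z - N%:Z)%:~R) * phi (y - (i%:Z - N%:Z)%:~R)) @ \oo).

Definition fmaxb (f : R -> R) (b : R) (y : R) : R := Num.max (f y) b.

Definition three_times_diff (h : R -> R) : Prop :=
  forall (i : nat) (y : R), (i < 3)%N -> derivable (derive1n i h) y 1.

Definition third_deriv_lip (h : R -> R) (U : set R) (c : R) : Prop :=
  forall y u, U u -> `|derive1n 3 h (y + u) - derive1n 3 h y| <= c * `|u|.

Section Prob.
Context {d0 : measure_display} {T : measurableType d0} (P : probability T R).

Definition Ex (h : T -> R) : R := fine (\int[P]_w (h w)%:E).

Definition event_of {d : nat} (X : 'I_d -> T -> R) (Y : T -> R)
  (B : 'I_d -> set R) (C : set R) : set T :=
  [set w | (forall j, B j (X j w)) /\ C (Y w)].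

Definition iid_sample {d : nat} (X : 'I_d -> T -> R) (Y : T -> R)
  (Xs : nat -> 'I_d -> T -> R) (Ys : nat -> T -> R) : Prop :=
  (forall i j, measurable_fun setT (Xs i j)) /\
  (forall i, measurable_fun setT (Ys i)) /\
  (forall i (B : 'I_d -> set R) (C : set R),
     (forall j, measurable (B j)) -> measurable C ->
     P (event_of (Xs i) (Ys i) B C) = P (event_of X Y B C)) /\
  (forall (s : seq nat) (B : nat -> 'I_d -> set R) (C : nat -> set R),
     uniq s -> (forall i j, measurable (B i j)) -> (forall i, measurable (C i)) ->
     P (\big[setI/setT]_(i <- s) event_of (Xs i) (Ys i) (B i) (C i))
     = (\prod_(i <- s) P (event_of (Xs i) (Ys i) (B i) (C i)))%E).

End Prob.
End Defs.

From HB Require Import structures.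
From mathcomp Require Import all_boot all_order all_algebra.
From mathcomp Require Import all_classical all_reals all_analysis.
From mathcomp Require Import measurable_realfun ring lra.

Set Implicit Arguments.
Unset Strict Implicit.
Unset Printing Implicit Defensive.

Import Order.TTheory GRing.Theory Num.Theory numFieldNormedType.Exports.
Local Open Scope classical_set_scope.
Local Open Scope ring_scope.

(* Writing t := f / f_b, which lies in [0, 1] and equals 1 off {f <= b_n}, the
   truncated summand is R_k R_l t^3, so it differs from R_k R_l by at most
   h_n := |R_k R_l| 1{f <= b_n}. Hence the difference of the two normalised
   centred sums is dominated by n^{-1/2} sum_i (h_n(Y_i) + E h_n(Y)), whose
   expectation is 2 sqrt n E h_n(Y); this tends to 0 by (A7) with a_n = b_n,
   and Markov's inequality concludes. *)

Lemma measurable_invr (R : realType) : measurable_fun setT (@GRing.inv R).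
Proof.
have -> : (@GRing.inv R) = fun x : R => if x == 0 then 0 else x^-1.
  by apply/funext => x; case: eqP => // ->; rewrite invr0.
apply: measurable_fun_if => //.
  exact: (measurable_fun_eqr (f := id) (g := cst 0)).
rewrite setTI.
have -> : (fun x : R => x == 0) @^-1` [set false] = [set x | x != 0].
  by apply/seteqP; split => x /=; case: (x == 0).
apply: open_continuous_measurable_fun; first exact: open_neq.
by move=> x; rewrite inE => /inv_continuous.
Qed.

Lemma measurable_fun_divr (R : realType) d (T : measurableType d) (u v : T -> R) :
  measurable_fun setT u -> measurable_fun setT v ->
  measurable_fun setT (fun x => u x / v x).
Proof.
by move=> mu mv; apply: measurable_funM => //; exact: measurableT_comp (@measurable_invr R) mv.
Qed.

Section truncation.
Variable R : realFieldType.
Implicit Types p q r y b : R.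

Let max_gt0 y b : 0 < y -> 0 < Num.max y b.
Proof. by move=> y0; rewrite lt_max y0. Qed.

Lemma truncated_ratio_cube p q y b : 0 < y ->
  p / Num.max y b * (q / Num.max y b) * (y / Num.max y b)
  = p / y * (q / y) * (y / Num.max y b) ^+ 3.
Proof. by move=> y0; field; rewrite !gt_eqF ?max_gt0. Qed.

Lemma ratio_max_ge0 y b : 0 < y -> 0 <= y / Num.max y b.
Proof. by move=> y0; rewrite divr_ge0 ?ltW ?max_gt0. Qed.

Lemma ratio_max_le1 y b : 0 < y -> y / Num.max y b <= 1.
Proof. by move=> y0; rewrite ler_pdivrMr ?max_gt0 // mul1r le_max lexx. Qed.

Lemma ratio_max_eq1 y b : 0 < y -> b < y -> y / Num.max y b = 1.
Proof. by move=> y0 /ltW ?; rewrite max_l // divff ?gt_eqF. Qed.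

Lemma ratio_max_cube_ge0 y b : 0 < y -> 0 <= (y / Num.max y b) ^+ 3.
Proof. by move=> y0; rewrite exprn_ge0 ?ratio_max_ge0. Qed.

Lemma ratio_max_cube_le1 y b : 0 < y -> (y / Num.max y b) ^+ 3 <= 1.
Proof. by move=> y0; rewrite exprn_ile1 ?ratio_max_ge0 ?ratio_max_le1. Qed.

Lemma normr_mul_ratio_max_le r y b : 0 < y ->
  `|r * (y / Num.max y b) ^+ 3| <= `|r|.
Proof.
move=> y0; rewrite normrM (ger0_norm (ratio_max_cube_ge0 b y0)).
by rewrite ler_piMr ?ratio_max_cube_le1.
Qed.

Lemma normr_mul_ratio_maxB_le r y b : 0 < y ->
  `|r * (y / Num.max y b) ^+ 3 - r| <= `|r| * (y <= b)%R%:R.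
Proof.
move=> y0; have [yb|/negbTE byy] := boolP (y <= b); last first.
  have lt_by : b < y by rewrite ltNge byy.
  by rewrite ratio_max_eq1 // expr1n mulr1 subrr normr0 mulr0.
rewrite mulr1 -{2}(mulr1 r) -mulrBr normrM ler_piMr //.
by rewrite ler0_norm ?subr_le0 ?ratio_max_cube_le1 // opprB lerBlDr lerDl ratio_max_cube_ge0.
Qed.

End truncation.

Lemma normrM_le_sqrD (R : realDomainType) (a b : R) : `|a * b| <= a ^+ 2 + b ^+ 2.
Proof.
rewrite normrM -(real_normK (num_real a)) -(real_normK (num_real b)).
have := sqr_ge0 (`|a| - `|b|); have := normr_ge0 a; have := normr_ge0 b; nra.
Qed.

Section expectation.
Context d (T : measurableType d) (R : realType) (P : probability T R).

Lemma ge0_integral_same_law (Z W : T -> R) (h : R -> \bar R) :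
  measurable_fun setT Z -> measurable_fun setT W ->
  (forall A, measurable A -> P (Z @^-1` A) = P (W @^-1` A)) ->
  measurable_fun setT h -> (forall y, 0 <= h y)%E ->
  (\int[P]_w h (Z w) = \int[P]_w h (W w))%E.
Proof.
move=> mZ mW ZW mh h0.
have := ge0_integral_pushforward mZ P measurableT mh (fun y _ => h0 y).
have := ge0_integral_pushforward mW P measurableT mh (fun y _ => h0 y).
rewrite !preimage_setT => <- <-.
by apply: eq_measure_integral => A mA _ /=; rewrite /pushforward ZW.
Qed.

Lemma integrable_normr_le (U V : T -> R) : measurable_fun setT U ->
  P.-integrable setT (EFin \o V) -> (forall w, `|U w| <= `|V w|) ->
  P.-integrable setT (EFin \o U).
Proof.
move=> mU iV UV; apply: (le_integrable measurableT _ _ iV) => [|w _].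
  exact/measurable_EFinP.
by rewrite /= lee_fin.
Qed.

Lemma integrable_sqr (U : T -> R) : measurable_fun setT U ->
  (\int[P]_w (U w ^+ 2)%:E < +oo)%E ->
  P.-integrable setT (EFin \o (fun w => U w ^+ 2)).
Proof.
move=> mU U2; apply/integrableP; split; first exact/measurable_EFinP/measurable_funX.
by under eq_integral do rewrite /= ger0_norm ?sqr_ge0//.
Qed.

Lemma integrableM_sqr (U V : T -> R) :
  measurable_fun setT U -> measurable_fun setT V ->
  (\int[P]_w (U w ^+ 2)%:E < +oo)%E -> (\int[P]_w (V w ^+ 2)%:E < +oo)%E ->
  P.-integrable setT (EFin \o (fun w => U w * V w)).
Proof.
move=> mU mV U2 V2.
apply: (integrable_normr_le (measurable_funM mU mV)
  (integrableD measurableT (integrable_sqr mU U2) (integrable_sqr mV V2))) => w.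
by rewrite /= (ger0_norm (x := _ + _)) ?addr_ge0 ?sqr_ge0 ?normrM_le_sqrD.
Qed.

Lemma normr_ExB_le (U V H : T -> R) :
  P.-integrable setT (EFin \o U) -> P.-integrable setT (EFin \o V) ->
  P.-integrable setT (EFin \o H) -> (forall w, `|U w - V w| <= H w) ->
  `|Ex P U - Ex P V| <= Ex P H.
Proof.
move=> iU iV iH UVH; rewrite /Ex.
have fU : (\int[P]_w (U w)%:E)%E \is a fin_num := integrable_fin_num measurableT iU.
have fV : (\int[P]_w (V w)%:E)%E \is a fin_num := integrable_fin_num measurableT iV.
have fH : (\int[P]_w (H w)%:E)%E \is a fin_num := integrable_fin_num measurableT iH.
have fUV : (\int[P]_w (U w)%:E - \int[P]_w (V w)%:E)%E \is a fin_num.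
  by rewrite fin_numB fU fV.
rewrite -fineB // -lee_fin -abse_EFin (fineK fUV) (fineK fH).
rewrite -integralB_EFin //; under eq_integral do rewrite -EFinB.
have mUV : measurable_fun setT (fun w => (U w - V w)%:E).
  by apply/measurable_EFinP/measurable_funB; apply/measurable_EFinP;
    [exact: measurable_int iU | exact: measurable_int iV].
apply: le_trans (le_abse_integral _ _ mUV) _ => //.
apply: ge0_le_integral => //.
- exact: measurableT_comp mUV.
- exact: measurable_int iH.
- by move=> w _; rewrite /= lee_fin.
Qed.

Lemma markov_dominated (F Z : T -> R) (eps : R) : 0 < eps ->
  measurable_fun setT F -> measurable_fun setT Z -> (forall w, `|F w| <= Z w) ->
  (eps%:E * P [set w | (eps < `|F w|)%R] <= \int[P]_w (Z w)%:E)%E.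
Proof.
move=> eps0 mF mZ FZ.
have mEZ : measurable_fun setT (EFin \o Z) by exact/measurable_EFinP.
have Z0 w : 0 <= Z w := le_trans (normr_ge0 _) (FZ w).
have -> : (\int[P]_w (Z w)%:E = \int[P]_w `|(EFin \o Z) w|)%E.
  by apply: eq_integral => w _; rewrite /= ger0_norm.
apply: le_trans _ (le_integral_abse P measurableT mEZ eps0).
apply: lee_wpmul2l; first by rewrite lee_fin ltW.
apply: le_measure; rewrite ?inE.
- rewrite -preimage_itvoy -(setTI (_ @^-1` _)).
  exact: (measurableT_comp (@normr_measurable R setT) mF).
- by apply: emeasurable_fun_c_infty => //; exact: measurableT_comp mEZ.
- move=> w /= /ltW epsF; split => //.
  by rewrite lee_fin ger0_norm // (le_trans epsF).
Qed.

End expectation.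

Lemma invr_sqrt_mulr_nat (R : rcfType) (n : nat) :
  (Num.sqrt n%:R)^-1 * n%:R = Num.sqrt n%:R :> R.
Proof.
case: n => [|n]; first by rewrite sqrtr0 invr0 mul0r.
by rewrite -{2}(sqr_sqrtr (ler0n _ n.+1)) expr2 mulKf // sqrtr_eq0 -ltNge ltr0Sn.
Qed.

Section centered_sum.
Context d (T : measurableType d) (R : realType) (P : probability T R).
Variables (Y : T -> R) (Ys : nat -> T -> R).

Definition centered_sum (u : R -> R) (n : nat) (w : T) : R :=
  (Num.sqrt n%:R)^-1 * \sum_(i < n) (u (Ys i w) - Ex P (fun w' => u (Y w'))).

Hypotheses (mY : measurable_fun setT Y) (mYs : forall i, measurable_fun setT (Ys i)).
Hypothesis Ys_law : forall i A, measurable A -> P (Ys i @^-1` A) = P (Y @^-1` A).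

Lemma measurable_centered_sum u n :
  measurable_fun setT u -> measurable_fun setT (centered_sum u n).
Proof.
move=> mu; apply: measurable_funM => //; apply: measurable_sum => i.
exact: measurable_funB (measurableT_comp mu (mYs i)) (measurable_cst _).
Qed.

Section dominated.
Variables (u v h : R -> R).
Hypotheses (mu : measurable_fun setT u) (mv : measurable_fun setT v).
Hypothesis mh : measurable_fun setT h.
Hypotheses (iu : P.-integrable setT (EFin \o (u \o Y))).
Hypotheses (iv : P.-integrable setT (EFin \o (v \o Y))).
Hypotheses (ih : P.-integrable setT (EFin \o (h \o Y))).
Hypothesis uvh : forall y, `|u y - v y| <= h y.

Let h0 y : 0 <= h y := le_trans (normr_ge0 _) (uvh y).

Let dominant n w :=
  (Num.sqrt n%:R)^-1 * \sum_(i < n) (h (Ys i w) + Ex P (fun w' => h (Y w'))).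

Let normr_centered_sumB_le n w :
  `|centered_sum u n w - centered_sum v n w| <= dominant n w.
Proof.
rewrite /centered_sum -mulrBr -sumrB normrM ger0_norm ?invr_ge0 ?sqrtr_ge0 //.
apply: ler_wpM2l; first by rewrite invr_ge0 sqrtr_ge0.
apply: le_trans (ler_norm_sum _ _ _) _; apply: ler_sum => i _.
have -> : forall a b c e : R, a - b - (c - e) = (a - c) - (b - e) by move=> *; ring.
apply: le_trans (ler_normB _ _) _; apply: lerD => //.
exact: normr_ExB_le.
Qed.

Let integral_h_Ys i : (\int[P]_w (h (Ys i w))%:E = \int[P]_w (h (Y w))%:E)%E.
Proof.
by apply: (ge0_integral_same_law (h := EFin \o h)) => //; [exact: Ys_law | exact/measurable_EFinP].
Qed.

Let integral_hY : (\int[P]_w (h (Y w))%:E = (Ex P (fun w => h (Y w)))%:E)%E.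
Proof. by rewrite fineK //; exact: (integrable_fin_num measurableT ih). Qed.

Let integral_dominant n :
  (\int[P]_w (dominant n w)%:E = (2 * Num.sqrt n%:R * Ex P (fun w => h (Y w)))%:E)%E.
Proof.
set e := Ex P _.
have mhYs i : measurable_fun setT (fun w => h (Ys i w)) := measurableT_comp mh (mYs i).
have e0 : 0 <= e by rewrite -lee_fin -integral_hY; apply: integral_ge0 => w _; rewrite lee_fin.
rewrite /dominant; under eq_integral do rewrite EFinM.
rewrite ge0_integralZl_EFin ?invr_ge0 ?sqrtr_ge0 //; first last.
- apply/measurable_EFinP; apply: measurable_sum => i.
  exact: measurable_funD (mhYs i) (measurable_cst _).
- by move=> w _; rewrite lee_fin; apply: sumr_ge0 => i _; rewrite addr_ge0.
under eq_integral do rewrite -sumEFin.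
rewrite ge0_integral_sum //; first last.
- by move=> i w _; rewrite lee_fin addr_ge0.
- by move=> i; apply/measurable_EFinP; exact: measurable_funD (mhYs i) (measurable_cst _).
have int_term i : (\int[P]_w (h (Ys i w) + e)%:E = (e + e)%:E)%E.
  under eq_integral do rewrite EFinD.
  rewrite ge0_integralD //; last 2 first.
  - by move=> w _; rewrite lee_fin.
  - by apply/measurable_EFinP.
  rewrite integral_h_Ys integral_hY integral_cst // [X in (_ * X)%E]probability_setT.
  by rewrite mule1.
under eq_bigr do rewrite int_term.
rewrite sumEFin sumr_const card_ord -EFinM.
by rewrite -[(e + e) *+ n]mulr_natl mulrA invr_sqrt_mulr_nat; congr _%:E; ring.
Qed.

Lemma prob_centered_sumB_le n eps : 0 < eps ->
  (P [set w | (eps < `|centered_sum u n w - centered_sum v n w|)%R]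
   <= (2 / eps)%:E * ((Num.sqrt n%:R)%:E * \int[P]_w (h (Y w))%:E))%E.
Proof.
move=> eps0; rewrite integral_hY -!EFinM.
rewrite (_ : 2 / eps * _ = eps^-1 * (2 * Num.sqrt n%:R * Ex P (fun w => h (Y w)))).
  rewrite EFinM lee_pdivlMl // -integral_dominant.
  apply: markov_dominated (normr_centered_sumB_le n) => //.
    exact: measurable_funB (measurable_centered_sum n mu) (measurable_centered_sum n mv).
  apply: measurable_funM => //; apply: measurable_sum => i.
  exact: measurable_funD (measurableT_comp mh (mYs i)) (measurable_cst _).
by rewrite mulrA; ring.
Qed.

End dominated.

Lemma cvg_prob_centered_sumB (u h : nat -> R -> R) (v : R -> R) :
  (forall n, measurable_fun setT (u n)) -> measurable_fun setT v ->
  (forall n, measurable_fun setT (h n)) ->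
  (forall n, P.-integrable setT (EFin \o (u n \o Y))) ->
  P.-integrable setT (EFin \o (v \o Y)) ->
  (forall n, P.-integrable setT (EFin \o (h n \o Y))) ->
  (forall n y, `|u n y - v y| <= h n y) ->
  (fun n => (Num.sqrt n%:R)%:E * \int[P]_w (h n (Y w))%:E)%E @ \oo --> 0%E ->
  forall eps, 0 < eps ->
  (fun n => P [set w | eps < `|centered_sum (u n) n w - centered_sum v n w|])
    @ \oo --> 0%E.
Proof.
move=> mu mv mh iu iv ih uvh hcvg eps eps0.
apply: (@squeeze_cvge _ _ _ _ (cst 0%E) _
  (fun n => (2 / eps)%:E * ((Num.sqrt n%:R)%:E * \int[P]_w (h n (Y w))%:E))%E).
- by apply: nearW => n; rewrite measure_ge0 /=; exact: prob_centered_sumB_le.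
- exact: cvg_cst.
- by rewrite -(mule0 (2 / eps)%:E); apply: cvgeZl.
Qed.

End centered_sum.

Lemma normr_mul_bool_le (R : numDomainType) (r : R) (c : bool) : `|r * c%:R| <= `|r|.
Proof. by case: c; rewrite ?mulr1 ?mulr0 ?normr0. Qed.

Lemma iid_sample_law d (T : measurableType d) (R : realType) (P : probability T R)
  (n : nat) (X : 'I_n -> T -> R) (Y : T -> R) Xs Ys :
  iid_sample P X Y Xs Ys ->
  forall i A, measurable A -> P (Ys i @^-1` A) = P (Y @^-1` A).
Proof.
move=> [_ [_ [same_law _]]] i A mA.
have := same_law i (fun _ => setT) A (fun _ => measurableT) mA.
have event_Y (Z : T -> R) Zs : event_of Zs Z (fun _ => setT) A = Z @^-1` A.
  by apply/seteqP; split => w /=; [case | move=> ?; split].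
by rewrite !event_Y.
Qed.

Lemma asym_equiv_refl (R : realType) (a : nat -> R) :
  (forall n, 0 < a n) -> asym_equiv a a.
Proof.
move=> a0; exists 1, 1; do 2!split => //.
by apply: nearW => n; rewrite divff ?gt_eqF // lexx.
Qed.

Theorem lemma10 (R : realType) (d0 : measure_display) (T : measurableType d0)
  (P : probability T R) (d : nat)
  (X : 'I_d -> T -> R) (Y : T -> R)
  (Xs : nat -> 'I_d -> T -> R) (Ys : nat -> T -> R)
  (f : R -> R) (fXY : 'I_d -> R * R -> R) (g : 'I_d -> R -> R)
  (G : R) (phi psi Phi : R -> R) (jn : nat -> int) (b : nat -> R) (c1 c2 : R)
  (* setting *)
  (HX : forall j, measurable_fun setT (X j))
  (HY : measurable_fun setT Y)
  (Hsample : iid_sample P X Y Xs Ys)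
  (Hfpos : forall y, 0 < f y)
  (Hfdens : forall A : set R, measurable A ->
     P (Y @^-1` A) = (\int[lebesgue_measure]_(y in A) (f y)%:E)%E)
  (HfXYmeas : forall j, measurable_fun setT (fXY j))
  (HfXYpos : forall j z, 0 <= fXY j z)
  (HfXYdens : forall j (A B : set R), measurable A -> measurable B ->
     P [set w | A (X j w) /\ B (Y w)] =
     (\int[lebesgue_measure]_(x in A)
        \int[lebesgue_measure]_(y in B) (fXY j (x, y))%:E)%E)
  (Hg : forall j y,
     (g j y)%:E = (\int[lebesgue_measure]_x (x * fXY j (x, y))%:E)%E)
  (HfL2 : L2fun f) (HgL2 : forall j, L2fun (g j))
  (Hjn_incr : {homo jn : m n / (m <= n)%N >-> m <= n})
  (Hjn_inf : forall M : int, \forall n \near \oo, M <= jn n)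
  (Hbpos : forall n, 0 < b n)
  (Hb0 : b @ \oo --> (0 : R))
  (* (A1) *)
  (HG : 0 < G)
  (HA1 : {ae P, forall w, Num.sqrt (\sum_(j < d) X j w ^+ 2) <= G})
  (* (A2) *)
  (HA2f : three_times_diff f) (HA2g : forall j, three_times_diff (g j))
  (HA2lip : exists (U : set R) (c : R), U \in nbhs (0 : R) /\ 0 < c /\
     third_deriv_lip f U c /\ forall j, third_deriv_lip (g j) U c)
  (* (A4) *)
  (HONB : is_ONB_L2 (wavelet_system phi psi))
  (HA4 : bdd_fun phi /\ compact_supp phi /\ bdd_fun psi /\ compact_supp psi)
  (* (A5) *)
  (HA5K : forall x y, `|wkernel phi x y| <= Phi (x - y))
  (HA5Phi : measurable_fun setT Phi /\ (forall u, 0 <= Phi u) /\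
     bdd_fun Phi /\ compact_supp Phi /\ (forall u, Phi (- u) = Phi u))
  (HA5int2 : (\int[lebesgue_measure]_u ((u ^+ 2) * (Phi u) ^+ 2)%:E < +oo)%E)
  (HA5intk : forall k : nat, k \in [:: 0%N; 1%N; 4%N] ->
     (\int[lebesgue_measure]_u ((`|u| ^+ k) * Phi u)%:E < +oo)%E)
  (HA5mom : forall (x : R) (k : nat), k \in [:: 1%N; 2%N; 3%N] ->
     (\int[lebesgue_measure]_y (wkernel phi x y * (y - x) ^+ k)%:E)%E = 0%E)
  (* (A6) *)
  (HA6j : asym_equiv (fun n => 2 `^ (- (jn n)%:~R)) (fun n => n%:R `^ (- c1)))
  (HA6b : asym_equiv b (fun n => n%:R `^ (- c2)))
  (HA6c : 0 < c2 /\ c2 < 1 / 10 /\ 1 / 8 + c2 / 4 < c1 /\ c1 < 1 / 4 - c2)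
  (* (A7) *)
  (HA7a : forall j, (\int[P]_w ((g j (Y w) / f (Y w)) ^+ 2)%:E < +oo)%E)
  (HA7b : forall (k l : 'I_d) (a : nat -> R), (forall n, 0 < a n) ->
     asym_equiv a b ->
     (fun n => (Num.sqrt n%:R)%:E *
        \int[P]_w (`|g k (Y w) / f (Y w) * (g l (Y w) / f (Y w))|
                    * ((f (Y w) <= a n)%R : bool)%:R)%:E)%E @ \oo --> 0%E)
  (k l : 'I_d) :
  let Rb (j : 'I_d) (n : nat) (y : R) := g j y / fmaxb f (b n) y in
  let Rj (j : 'I_d) (y : R) := g j y / f y in
  let An (n : nat) (y : R) := Rb k n y * Rb l n y * (f y / fmaxb f (b n) y) in
  let B (y : R) := Rj k y * Rj l y in
  let S1 (n : nat) (w : T) := (Num.sqrt n%:R)^-1 *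
      \sum_(i < n) (An n (Ys i w) - Ex P (fun w' => An n (Y w'))) in
  let S2 (n : nat) (w : T) := (Num.sqrt n%:R)^-1 *
      \sum_(i < n) (B (Ys i w) - Ex P (fun w' => B (Y w'))) in
  forall eps : R, 0 < eps ->
    (fun n => P [set w | eps < `|S1 n w - S2 n w|]) @ \oo --> 0%E.
Proof.
move=> Rb Rj An B S1 S2 eps eps0.
have mf : measurable_fun setT f := HfL2.1.
have mg j : measurable_fun setT (g j) := (HgL2 j).1.
have mRj j : measurable_fun setT (Rj j) := measurable_fun_divr (mg j) mf.
have mB : measurable_fun setT B := measurable_funM (mRj k) (mRj l).
have mfb n : measurable_fun setT (fmaxb f (b n)) := measurable_maxr mf (measurable_cst _).
have mAn n : measurable_fun setT (An n).
  apply: measurable_funM; last exact: measurable_fun_divr mf (mfb n).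
  by apply: measurable_funM; exact: measurable_fun_divr (mg _) (mfb n).
have An_trunc n y : An n y = B y * (f y / fmaxb f (b n) y) ^+ 3.
  exact: truncated_ratio_cube (Hfpos y).
pose h n y := `|B y| * (f y <= b n)%R%:R.
have mh n : measurable_fun setT (h n).
  apply: measurable_funM; first exact: measurableT_comp mB.
  apply: measurableT_comp => //.
  exact: (measurable_fun_ler (f := f) (g := cst (b n))).
have iB : P.-integrable setT (EFin \o (B \o Y)).
  exact: integrableM_sqr (measurableT_comp (mRj k) HY) (measurableT_comp (mRj l) HY)
    (HA7a k) (HA7a l).
have iAn n : P.-integrable setT (EFin \o (An n \o Y)).
  apply: integrable_normr_le (measurableT_comp (mAn n) HY) iB _ => w.
  by rewrite /= An_trunc normr_mul_ratio_max_le.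
have ih n : P.-integrable setT (EFin \o (h n \o Y)).
  apply: integrable_normr_le (measurableT_comp (mh n) HY) iB _ => w.
  by rewrite /= /h normrM normr_id -normrM normr_mul_bool_le.
apply: (cvg_prob_centered_sumB (u := An) (v := B) (h := h) HY Hsample.2.1
  (iid_sample_law Hsample)) => //.
- by move=> n y; rewrite An_trunc; exact: normr_mul_ratio_maxB_le.
- exact: HA7b (asym_equiv_refl Hbpos).
Qed.
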